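(* Let $X,Y,Z,S$ be discrete random variables taking values in finite sets $\mathcal X,\mathcal Y,\mathcal Z,\mathcal S$, and suppose $X$ is conditionally independent of $Z$ given $(Y,S)$. Then \[\nu_{X,Z|S}\le\frac{|\mathcal Y|}{|\mathcal Z|}\nu_{X,Y|S}.\]
   Context: For discrete random variables $A,B,S$ with finite ranges $\mathcal A,\mathcal B$, define $\nu_{A,B|S}:=\mathbb{E}_S\sum_{a\in\mathcal A}\frac{1}{|\mathcal A|}\sum_{b\in\mathcal B}\frac{1}{|\mathcal B|}\big|\mathbb{P}(A=a,B=b|S)-\mathbb{P}(A=a|S)\mathbb{P}(B=b|S)\big|$, where the outer expectation is over $S$ (values with positive probability). *)

From mathcomp Require Import all_boot all_order all_algebra.
Set Implicit Arguments. Unset Strict Implicit. Unset Printing Implicit Defensive.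
Import Order.TTheory GRing.Theory Num.Theory.
Local Open Scope ring_scope.

(* Random variables are functions out of Omega into finite types; the finite
   range of a random variable is the whole codomain type. *)

Definition is_pmf (R : realFieldType) (Omega : finType) (P : Omega -> R) :=
  (forall w, 0 <= P w) /\ \sum_(w : Omega) P w = 1.

Definition Pr (R : realFieldType) (Omega : finType) (P : Omega -> R)
  (E : pred Omega) : R := \sum_(w | E w) P w.

Definition cPr (R : realFieldType) (Omega : finType) (P : Omega -> R)
  (E F : pred Omega) : R := Pr P [pred w | E w && F w] / Pr P F.

Definition nu (R : realFieldType) (Omega : finType) (P : Omega -> R)
  (TA TB TS : finType) (A : Omega -> TA) (B : Omega -> TB) (S : Omega -> TS) : R :=
  \sum_(s : TS | 0 < Pr P [pred w | S w == s])
    Pr P [pred w | S w == s] *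
    \sum_(a : TA) #|TA|%:R^-1 * \sum_(b : TB) #|TB|%:R^-1 *
      `| cPr P [pred w | (A w == a) && (B w == b)] [pred w | S w == s]
         - cPr P [pred w | A w == a] [pred w | S w == s]
           * cPr P [pred w | B w == b] [pred w | S w == s] |.

Definition cond_indep (R : realFieldType) (Omega : finType) (P : Omega -> R)
  (TX TZ TC : finType) (X : Omega -> TX) (Z : Omega -> TZ) (C : Omega -> TC) :=
  forall (c : TC), 0 < Pr P [pred w | C w == c] ->
  forall (x : TX) (z : TZ),
    cPr P [pred w | (X w == x) && (Z w == z)] [pred w | C w == c]
    = cPr P [pred w | X w == x] [pred w | C w == c]
      * cPr P [pred w | Z w == z] [pred w | C w == c].

(* Conditioning on each event S = s of positive probability turns the
   hypothesis into conditional independence of X and Z given Y, so it suffices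
   to treat a single law.  Writing g(a, b) = P(A = a, B = b) - P(A = a) P(B = b),
   conditional independence expresses g(x, z) as the mixture
   sum_y P(Z = z | Y = y) g(x, y); as these weights sum to at most 1 over z,
   the triangle inequality gives sum_z |g(x, z)| <= sum_y |g(x, y)|, and
   averaging over z instead of over y produces the factor |Y| / |Z|. *)

From mathcomp Require Import all_boot all_order all_algebra.
From mathcomp Require Import ring.
Set Implicit Arguments. Unset Strict Implicit. Unset Printing Implicit Defensive.
Import Order.TTheory GRing.Theory Num.Theory.
Local Open Scope ring_scope.

Lemma sum_norm_mix_le (R : numDomainType) (I J : finType)
    (k : I -> J -> R) (d : I -> R) :
  (forall i j, 0 <= k i j) -> (forall i, \sum_j k i j <= 1) ->
  \sum_j `|\sum_i k i j * d i| <= \sum_i `|d i|.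
Proof.
move=> k_ge0 k_le1.
apply: (@le_trans _ _ (\sum_j \sum_i k i j * `|d i|)).
  apply: ler_sum => j _; apply: (le_trans (ler_norm_sum _ _ _)).
  by apply: ler_sum => i _; rewrite normrM ger0_norm.
rewrite exchange_big /=; apply: ler_sum => i _.
by rewrite -mulr_suml ler_piMl.
Qed.

Section Conditioning.
Variables (R : realFieldType) (Omega : finType).

Definition cond_pmf (P : Omega -> R) (F : pred Omega) (w : Omega) : R :=
  if F w then P w / Pr P F else 0.

Definition indep_gap (Q : Omega -> R) (TA TB : finType)
    (A : Omega -> TA) (B : Omega -> TB) (a : TA) (b : TB) : R :=
  Pr Q [pred w | (A w == a) && (B w == b)]
  - Pr Q [pred w | A w == a] * Pr Q [pred w | B w == b].

Definition mean_abs_gap (Q : Omega -> R) (TA TB : finType)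
    (A : Omega -> TA) (B : Omega -> TB) : R :=
  \sum_(a : TA) #|TA|%:R^-1 * \sum_(b : TB) #|TB|%:R^-1 * `|indep_gap Q A B a b|.

Variable P : Omega -> R.

Lemma eq_Pr (E F : pred Omega) : E =1 F -> Pr P E = Pr P F.
Proof. exact: eq_bigl. Qed.

Lemma Pr_partition (T : finType) (f : Omega -> T) (E : pred Omega) :
  Pr P E = \sum_(t : T) Pr P [pred w | E w && (f w == t)].
Proof. exact: partition_big. Qed.

Lemma Pr_cond_pmf (E F : pred Omega) : Pr (cond_pmf P F) E = cPr P E F.
Proof.
rewrite /cPr /Pr mulr_suml [RHS]big_mkcondr /=.
by apply: eq_bigr => w _; rewrite /cond_pmf; case: (F w).
Qed.

Lemma cPr_cond_pmf (E F G : pred Omega) : Pr P F != 0 ->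
  cPr (cond_pmf P F) E G = cPr P E [pred w | G w && F w].
Proof.
move=> pF; rewrite /cPr !Pr_cond_pmf /cPr.
rewrite (@eq_Pr [pred w | (E w && G w) && F w] [pred w | E w && (G w && F w)]);
  last by move=> w /=; rewrite andbA.
by rewrite invf_div mulrA divfK.
Qed.

Lemma eq_cPr (E F G : pred Omega) : F =1 G -> cPr P E F = cPr P E G.
Proof.
move=> FG; rewrite /cPr (eq_Pr FG); congr (_ / _).
by apply: eq_Pr => w /=; rewrite FG.
Qed.

Lemma cond_indep_cond_pmf (TX TY TZ TS : finType) (X : Omega -> TX)
    (Y : Omega -> TY) (Z : Omega -> TZ) (S : Omega -> TS) (s : TS) :
  cond_indep P X Z (fun w => (Y w, S w)) -> 0 < Pr P [pred w | S w == s] ->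
  cond_indep (cond_pmf P [pred w | S w == s]) X Z Y.
Proof.
move=> XZ_indep_YS pS y pY x z.
have YS_pairE : [pred w | (Y w == y) && (S w == s)] =1 [pred w | (Y w, S w) == (y, s)].
  by move=> w /=; rewrite xpair_eqE.
rewrite !cPr_cond_pmf ?gt_eqF // !(eq_cPr _ YS_pairE); apply: XZ_indep_YS.
by move: pY; rewrite Pr_cond_pmf /cPr pmulr_lgt0 ?invr_gt0 // (eq_Pr YS_pairE).
Qed.

Lemma nuE (TA TB TS : finType) (A : Omega -> TA) (B : Omega -> TB) (S : Omega -> TS) :
  nu P A B S = \sum_(s : TS | 0 < Pr P [pred w | S w == s])
    Pr P [pred w | S w == s] * mean_abs_gap (cond_pmf P [pred w | S w == s]) A B.
Proof.
apply: eq_bigr => s _; congr (_ * _); apply: eq_bigr => a _; congr (_ * _).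
by apply: eq_bigr => b _; rewrite /indep_gap !Pr_cond_pmf.
Qed.

Hypothesis P_ge0 : forall w, 0 <= P w.

Lemma Pr_ge0 (E : pred Omega) : 0 <= Pr P E.
Proof. exact: sumr_ge0. Qed.

Lemma cond_pmf_ge0 (F : pred Omega) w : 0 <= cond_pmf P F w.
Proof. by rewrite /cond_pmf; case: (F w); rewrite ?divr_ge0 ?Pr_ge0. Qed.

Lemma Pr_andE (E F : pred Omega) :
  Pr P [pred w | E w && F w] = cPr P E F * Pr P F.
Proof.
have [pF0 | pF] := eqVneq (Pr P F) 0; last by rewrite divfK.
rewrite pF0 mulr0; apply/eqP; rewrite eq_le Pr_ge0 andbT -pF0.
rewrite /Pr [leRHS]big_mkcond [leLHS]big_mkcond /=; apply: ler_sum => w _.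
by case: (E w) (F w) => [] [].
Qed.

Lemma sum_cPr_le1 (T : finType) (f : Omega -> T) (F : pred Omega) :
  \sum_(t : T) cPr P [pred w | f w == t] F <= 1.
Proof.
rewrite /cPr -mulr_suml.
have -> : \sum_t Pr P [pred w | (f w == t) && F w] = Pr P F.
  rewrite (Pr_partition f F); apply: eq_bigr => t _.
  by apply: eq_Pr => w /=; rewrite andbC.
by have [-> | pF] := eqVneq (Pr P F) 0; rewrite ?mul0r ?divff.
Qed.

Section CondIndep.
Variables (TX TY TZ : finType) (X : Omega -> TX) (Y : Omega -> TY) (Z : Omega -> TZ).
Hypothesis XZ_indep_Y : cond_indep P X Z Y.

Lemma cond_indep_factor x y z :
  Pr P [pred w | (X w == x) && (Z w == z) && (Y w == y)]
  = cPr P [pred w | Z w == z] [pred w | Y w == y]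
    * Pr P [pred w | (X w == x) && (Y w == y)].
Proof.
rewrite (Pr_andE [pred w | (X w == x) && (Z w == z)]) Pr_andE.
have := Pr_ge0 [pred w | Y w == y]; rewrite le0r => /orP[/eqP-> | pY].
  by rewrite !mulr0.
by rewrite XZ_indep_Y //; ring.
Qed.

Lemma indep_gap_mix x z :
  indep_gap P X Z x z
  = \sum_y cPr P [pred w | Z w == z] [pred w | Y w == y] * indep_gap P X Y x y.
Proof.
rewrite /indep_gap (Pr_partition Y [pred w | (X w == x) && (Z w == z)]).
rewrite (Pr_partition Y [pred w | Z w == z]) mulr_sumr -sumrB.
apply: eq_bigr => y _.
by rewrite cond_indep_factor (Pr_andE [pred w | Z w == z] [pred w | Y w == y]); ring.
Qed.

Lemma sum_norm_indep_gap_le x :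
  \sum_z `|indep_gap P X Z x z| <= \sum_y `|indep_gap P X Y x y|.
Proof.
under eq_bigr => z _ do rewrite indep_gap_mix.
apply: sum_norm_mix_le => [y z | y]; last exact: sum_cPr_le1.
by rewrite divr_ge0 ?Pr_ge0.
Qed.

Lemma mean_abs_gap_le :
  mean_abs_gap P X Z <= #|TY|%:R / #|TZ|%:R * mean_abs_gap P X Y.
Proof.
rewrite /mean_abs_gap mulr_sumr; apply: ler_sum => x _.
rewrite mulrCA; apply: ler_wpM2l; first by rewrite invr_ge0.
rewrite -mulr_sumr; apply: le_trans (ler_wpM2l _ (sum_norm_indep_gap_le x)) _.
  by rewrite invr_ge0.
rewrite mulr_sumr [leRHS]mulr_sumr; apply: ler_sum => y _.
have TY_neq0 : (#|TY|%:R : R) != 0.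
  by rewrite pnatr_eq0 -lt0n; apply/card_gt0P; exists y.
by rewrite mulrCA !mulrA mulVf // mul1r.
Qed.

End CondIndep.
End Conditioning.

Theorem lemma18 (R : realFieldType) (Omega : finType) (P : Omega -> R)
  (TX TY TZ TS : finType)
  (X : Omega -> TX) (Y : Omega -> TY) (Z : Omega -> TZ) (S : Omega -> TS) :
  is_pmf P ->
  cond_indep P X Z (fun w => (Y w, S w)) ->
  nu P X Z S <= (#|TY|%:R / #|TZ|%:R) * nu P X Y S.
Proof.
move=> [P_ge0 _] XZ_indep_YS.
rewrite !nuE mulr_sumr; apply: ler_sum => s pS.
rewrite mulrCA; apply: ler_wpM2l; first exact: ltW.
apply: mean_abs_gap_le; first exact: cond_pmf_ge0.
exact: cond_indep_cond_pmf.
Qed.
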